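(* Let $A\in\mathbb{R}^{n\times n}$ be symmetric of rank $r\ge 1$, written as $A=Q\Lambda Q^\top=\sum_{i=1}^r\lambda_i\vec{q}_i\vec{q}_i^\top$, where $Q=[\vec{q}_1\ \cdots\ \vec{q}_r]\in\mathbb{R}^{n\times r}$ has orthonormal columns that are eigenvectors of $A$ for its nonzero eigenvalues and $\Lambda=\mathrm{Diag}(\lambda_1,\dots,\lambda_r)$ is the diagonal matrix of these nonzero eigenvalues. Let $\bar{Q}=[\bar{\vec{q}}_{r+1}\ \cdots\ \bar{\vec{q}}_n]$ have orthonormal columns spanning the null space of $A$, and let $\vec{x}_0=Q\nu+\bar{Q}\mu$ with $\nu\in\mathbb{R}^r$, $\nu\neq 0$, $\mu\in\mathbb{R}^{n-r}$. Let $\vec{x}_{t+1}=A\vec{x}_t$, $X_j=[\vec{x}_0\ \cdots\ \vec{x}_j]$, $Y_j=[\vec{x}_1\ \cdots\ \vec{x}_{j+1}]$, $\hat{A}_j=Y_jX_j^{\dagger}$. Let $1\le k<n$, let $U_{k-1}$ be the matrix of left singular vectors of $X_{k-1}$ corresponding to its nonzero singular values, and $S_k=I-U_{k-1}U_{k-1}^\top$. Assume $\|S_kQ\Lambda^k\nu\|\neq 0$. Then $$A-\hat{A}_k=A\left(I-\frac{S_kQ\Lambda^k\nu\nu^\top\Lambda^kQ^\top}{\|S_kQ\Lambda^k\nu\|^2}\right)S_k .$$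
   Context: $M^{\dagger}$ is the Moore–Penrose pseudo-inverse; $\|\cdot\|$ on vectors is the Euclidean norm. $S_k$ is the orthogonal projection onto the orthogonal complement of the range of $X_{k-1}$. *)

From HB Require Import structures.
From mathcomp Require Import all_boot all_order all_algebra.
From mathcomp Require Import boolp classical_sets.
From mathcomp Require Import reals.
Set Implicit Arguments. Unset Strict Implicit. Unset Printing Implicit Defensive.
Import Order.TTheory GRing.Theory Num.Theory.
Local Open Scope ring_scope.
Local Open Scope classical_set_scope.

Section Defs.
Variable R : realType.

Definition is_pinv m n (X : 'M[R]_(m, n)) (P : 'M[R]_(n, m)) : Prop :=
  [/\ X *m P *m X = X, P *m X *m P = P,
      (X *m P)^T = X *m P & (P *m X)^T = P *m X].

Definition pinv m n (X : 'M[R]_(m, n)) : 'M[R]_(n, m) :=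
  xget 0 [set P | is_pinv X P].

(* P is the orthogonal projection of R^m onto the orthogonal complement of
   the column space (range) of X : the column space of P (= row space of P^T)
   is {v | v^T X = 0}, i.e. kermx X. *)
Definition is_orth_proj_compl m n (X : 'M[R]_(m, n)) (P : 'M[R]_m) : Prop :=
  [/\ P^T = P, P *m P = P & (P^T == kermx X)%MS].

Definition orth_proj_compl m n (X : 'M[R]_(m, n)) : 'M[R]_m :=
  xget 0 [set P | is_orth_proj_compl X P].

Definition vnorm m (v : 'cV[R]_m) : R := Num.sqrt (\sum_i v i 0 ^+ 2).

Definition iter_x n (A : 'M[R]_n) (x0 : 'cV[R]_n) (t : nat) : 'cV[R]_n :=
  iter t (fun x => A *m x) x0.

Definition Xmat n (A : 'M[R]_n) (x0 : 'cV[R]_n) (j : nat) : 'M[R]_(n, j.+1) :=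
  \matrix_(i < n, t < j.+1) iter_x A x0 t i 0.

Definition Ymat n (A : 'M[R]_n) (x0 : 'cV[R]_n) (j : nat) : 'M[R]_(n, j.+1) :=
  \matrix_(i < n, t < j.+1) iter_x A x0 t.+1 i 0.

Definition Ahat n (A : 'M[R]_n) (x0 : 'cV[R]_n) (j : nat) : 'M[R]_n :=
  Ymat A x0 j *m pinv (Xmat A x0 j).

End Defs.

(* Since Y_k = A X_k, we have A - Â_k = A (I - X_k X_k^†), and I - X_k X_k^†
   is the orthogonal projector onto the orthogonal complement of range X_k.
   Appending the column x_k = Q Λ^k ν to X_(k-1) shrinks the projector S_k
   by one Gram-Schmidt step: it becomes S_k - w w^T / ‖w‖² with w = S_k x_k,
   and as S_k is symmetric and idempotent, w^T = x_k^T S_k, which turns this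
   into the stated formula. *)
From HB Require Import structures.
From mathcomp Require Import all_boot all_order all_algebra.
From mathcomp Require Import boolp classical_sets reals.
Import Order.TTheory GRing.Theory Num.Theory.
Local Open Scope ring_scope.

Section PseudoInverse.
Context {R : realType}.

Lemma mulmx_tr_eq0 {m} (v : 'rV[R]_m) : v *m v^T = 0 -> v = 0.
Proof.
move=> /matrixP /(_ 0 0); rewrite !mxE => vv0.
have /eqP : \sum_j v 0 j ^+ 2 = 0.
  by rewrite -[RHS]vv0; apply: eq_bigr => j _; rewrite !mxE expr2.
rewrite psumr_eq0 => [/allP v2_0|j _]; last exact: sqr_ge0.
apply/matrixP => i j; rewrite (ord1 i) mxE.
by have /implyP := v2_0 j (mem_index_enum _); rewrite sqrf_eq0 => /(_ isT)/eqP.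
Qed.

Lemma row_free_mul_tr_unit {p m} (B : 'M[R]_(p, m)) :
  row_free B -> B *m B^T \in unitmx.
Proof.
move=> freeB; rewrite -row_free_unit -kermx_eq0; apply/eqP/row_matrixP => i.
rewrite row0; set u := row i _.
have uBBt : u *m (B *m B^T) = 0 by rewrite /u -row_mul mulmx_ker row0.
have : (u *m B) *m (u *m B)^T = 0.
  by rewrite trmx_mul !mulmxA -(mulmxA u) uBBt mul0mx.
by move/mulmx_tr_eq0/eqP; rewrite mulmx_free_eq0 // => /eqP.
Qed.

Lemma is_pinv_mul {m r p} (C : 'M[R]_(m, r)) (F : 'M[R]_(r, p)) :
  C^T *m C \in unitmx -> F *m F^T \in unitmx ->
  is_pinv (C *m F) (F^T *m invmx (F *m F^T) *m invmx (C^T *m C) *m C^T).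
Proof.
move=> uC uF; set a := invmx (F *m F^T); set b := invmx (C^T *m C).
have ta : a^T = a by rewrite /a trmx_inv trmx_mul trmxK.
have tb : b^T = b by rewrite /b trmx_inv trmx_mul trmxK.
have XP : C *m F *m (F^T *m a *m b *m C^T) = C *m b *m C^T.
  by rewrite !mulmxA -(mulmxA C F) -(mulmxA C _ a) mulmxV // mulmx1.
have PX : F^T *m a *m b *m C^T *m (C *m F) = F^T *m a *m F.
  by rewrite !mulmxA -(mulmxA _ C^T C) -(mulmxA _ b) mulVmx // mulmx1.
split.
- by rewrite XP !mulmxA -(mulmxA _ C^T C) -(mulmxA C b) mulVmx // mulmx1.
- rewrite PX !mulmxA -(mulmxA _ F F^T) -(mulmxA _ (F *m F^T) a).
  by rewrite mulmxV // mulmx1.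
- by rewrite XP !trmx_mul trmxK tb mulmxA.
- by rewrite PX !trmx_mul trmxK ta mulmxA.
Qed.

Lemma pinv_exists {m p} (X : 'M[R]_(m, p)) : exists P, is_pinv X P.
Proof.
rewrite -[X in exists P, is_pinv X P]mulmx_base; eexists; apply: is_pinv_mul.
  rewrite -{2}[col_base X]trmxK; apply: row_free_mul_tr_unit.
  by rewrite /row_free mxrank_tr; apply: col_base_full.
exact/row_free_mul_tr_unit/row_base_free.
Qed.

Lemma pinvP {m p} (X : 'M[R]_(m, p)) : is_pinv X (pinv X).
Proof. exact: xgetPex (pinv_exists X). Qed.

End PseudoInverse.

Section OrthogonalProjector.
Context {R : realType}.

Lemma trmx_subr1 {m} (E : 'M[R]_m) : (1%:M - E)^T = 1%:M - E^T.
Proof. by rewrite linearB /= trmx1. Qed.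

Lemma trmxX {m} (E : 'M[R]_m) t : (E ^+ t)^T = E^T ^+ t.
Proof.
elim: t => [|t IHt]; first by rewrite !expr0 trmx1.
by rewrite exprS exprSr -!mulmxE trmx_mul IHt.
Qed.

Lemma is_orth_proj_complP {m p} (X : 'M[R]_(m, p)) (P : 'M[R]_m) :
  is_orth_proj_compl X P <->
  [/\ P^T = P, P *m X = 0 &
      forall q (B : 'M[R]_(q, m)), B *m X = 0 -> B *m P = B].
Proof.
split=> [[symP idemP /andP[/sub_kermxP PX kerP]] | [symP PX fixP]].
  split=> // [|q B /sub_kermxP BX]; first by rewrite -symP.
  by have /submxP[D ->] := submx_trans BX kerP; rewrite symP -mulmxA idemP.
split=> //; first exact: fixP.
apply/andP; split; first by apply/sub_kermxP; rewrite symP.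
by rewrite -(fixP _ _ (mulmx_ker X)) symP submxMl.
Qed.

Lemma is_orth_proj_compl_unique {m p} (X : 'M[R]_(m, p)) (P1 P2 : 'M[R]_m) :
  is_orth_proj_compl X P1 -> is_orth_proj_compl X P2 -> P1 = P2.
Proof.
move=> /is_orth_proj_complP[sym1 P1X fix1] /is_orth_proj_complP[sym2 P2X fix2].
by rewrite -[LHS]sym1 -(fix2 _ _ P1X) trmx_mul sym1 sym2 fix1.
Qed.

Lemma is_orth_proj_compl_pinv {m p} (X : 'M[R]_(m, p)) :
  is_orth_proj_compl X (1%:M - X *m pinv X).
Proof.
have [XPX _ symXP _] := pinvP X.
apply/is_orth_proj_complP; split.
- by rewrite trmx_subr1 symXP.
- by rewrite mulmxBl mul1mx XPX subrr.
- by move=> q B BX; rewrite mulmxBr mulmx1 mulmxA BX mul0mx subr0.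
Qed.

Lemma orth_proj_complE {m p} (X : 'M[R]_(m, p)) (P : 'M[R]_m) :
  is_orth_proj_compl X P -> orth_proj_compl X = P.
Proof.
move=> projP; apply: (xget_unique _ projP) => P' projP'.
exact: is_orth_proj_compl_unique projP' projP.
Qed.

Lemma orth_proj_compl_pinv {m p} (X : 'M[R]_(m, p)) :
  orth_proj_compl X = 1%:M - X *m pinv X.
Proof. exact/orth_proj_complE/is_orth_proj_compl_pinv. Qed.

Lemma orth_proj_complP {m p} (X : 'M[R]_(m, p)) :
  is_orth_proj_compl X (orth_proj_compl X).
Proof. rewrite orth_proj_compl_pinv; exact: is_orth_proj_compl_pinv. Qed.

Lemma tr_mul_vnorm {m} (v : 'cV[R]_m) : v^T *m v = (vnorm v ^+ 2)%:M.
Proof.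
apply/matrixP => i j; rewrite (ord1 i) (ord1 j) !mxE eqxx mulr1n.
rewrite sqr_sqrtr; last by apply: sumr_ge0 => l _; apply: sqr_ge0.
by apply: eq_bigr => l _; rewrite !mxE expr2.
Qed.

(* Gram-Schmidt step; the hypothesis says that X has the same left annihilators
   as the block matrix [M x], which avoids casting its column count. *)
Lemma orth_proj_compl_step {m p p'} {X : 'M[R]_(m, p)} {M : 'M[R]_(m, p')}
    {x : 'cV[R]_m} :
  (forall q (B : 'M[R]_(q, m)), B *m X = 0 <-> B *m M = 0 /\ B *m x = 0) ->
  let S := orth_proj_compl M in let w := S *m x in
  vnorm w != 0 ->
  orth_proj_compl X = S - (vnorm w ^+ 2)^-1 *: (w *m w^T).
Proof.
move=> annX S w w_neq0; set v := vnorm w ^+ 2.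
have /is_orth_proj_complP[symS SM fixS] := orth_proj_complP M.
have idemS : S *m S = S by apply: fixS.
have wtS : w^T *m S = w^T by rewrite trmx_mul symS -mulmxA idemS.
have wtx : w^T *m x = v%:M by rewrite -tr_mul_vnorm -{1}wtS -mulmxA.
apply/orth_proj_complE/is_orth_proj_complP; split.
- by rewrite linearB /= linearZ /= trmx_mul trmxK symS.
- apply/annX; split; rewrite mulmxBl -scalemxAl -mulmxA.
    by rewrite -wtS -!mulmxA SM !mulmx0 scaler0 subrr.
  by rewrite wtx mul_mx_scalar scalerA mulVf ?scale1r ?subrr ?expf_neq0.
- move=> q B /annX[BM Bx].
  have Bw : B *m w = 0 by rewrite mulmxA fixS.
  by rewrite mulmxBr fixS // -scalemxAr mulmxA Bw mul0mx scaler0 subr0.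
Qed.

End OrthogonalProjector.

Section Krylov.
Context {R : realType} {n : nat}.
Variables (A : 'M[R]_n) (x0 : 'cV[R]_n).

Lemma mulmx_Xmat_eq0 {q} (B : 'M[R]_(q, n)) t :
  B *m Xmat A x0 t = 0 <-> forall j, (j <= t)%N -> B *m iter_x A x0 j = 0.
Proof.
split=> [BX j jt | Bx].
  apply/matrixP => i l; rewrite (ord1 l).
  have /matrixP /(_ i (Ordinal (jt : (j < t.+1)%N))) := BX.
  by rewrite !mxE => e; rewrite -[RHS]e; apply: eq_bigr => s _; rewrite !mxE.
apply/matrixP => i j; have /matrixP /(_ i 0) := Bx j (ltn_ord j).
by rewrite !mxE => e; rewrite -[RHS]e; apply: eq_bigr => s _; rewrite !mxE.
Qed.

Lemma mulmx_Xmat_succ_eq0 {q} (B : 'M[R]_(q, n)) t :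
  B *m Xmat A x0 t.+1 = 0 <->
  B *m Xmat A x0 t = 0 /\ B *m iter_x A x0 t.+1 = 0.
Proof.
rewrite !mulmx_Xmat_eq0; split=> [Bx | [Bx Bxt] j].
  by split=> [j jt|]; apply: Bx; rewrite // ltnW.
by rewrite leq_eqVlt => /predU1P[->|]; last exact: Bx.
Qed.

Lemma Ymat_Xmat t : Ymat A x0 t = A *m Xmat A x0 t.
Proof.
by apply/matrixP => i j; rewrite !mxE; apply: eq_bigr => s _; rewrite !mxE.
Qed.

Lemma subr_Ahat t : A - Ahat A x0 t = A *m orth_proj_compl (Xmat A x0 t).
Proof.
by rewrite orth_proj_compl_pinv /Ahat Ymat_Xmat mulmxBr mulmx1 mulmxA.
Qed.

Lemma iter_x_succ_eigen {r p} {Q : 'M[R]_(n, r)} {D : 'M[R]_r}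
    {Qbar : 'M[R]_(n, p)} {nu : 'cV[R]_r} {mu : 'cV[R]_p} :
  A *m Q = Q *m D -> A *m Qbar = 0 -> x0 = Q *m nu + Qbar *m mu ->
  forall t, iter_x A x0 t.+1 = Q *m D ^+ t.+1 *m nu.
Proof.
move=> AQ AQbar ->; elim=> [|t IHt].
  by rewrite /iter_x /= mulmxDr !mulmxA AQ AQbar mul0mx addr0 expr1.
by rewrite [LHS]/iter_x iterS -/(iter_x _ _ _) IHt !mulmxA AQ -mulmxA.
Qed.

End Krylov.

Theorem lemma1 (R : realType) (n r k : nat) (A : 'M[R]_n)
  (Q : 'M[R]_(n, r)) (lam : 'rV[R]_r) (Qbar : 'M[R]_(n, n - r))
  (nu : 'cV[R]_r) (mu : 'cV[R]_(n - r)) (x0 : 'cV[R]_n) :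
  A^T = A ->
  \rank A = r -> (1 <= r)%N ->
  Q^T *m Q = 1%:M ->
  (forall i : 'I_r, lam 0 i != 0) ->
  (forall i : 'I_r, A *m col i Q = lam 0 i *: col i Q) ->
  A = Q *m diag_mx lam *m Q^T ->
  Qbar^T *m Qbar = 1%:M ->
  (Qbar^T == kermx A^T)%MS ->
  x0 = Q *m nu + Qbar *m mu ->
  nu != 0 ->
  (1 <= k)%N -> (k < n)%N ->
  let S := orth_proj_compl (Xmat A x0 k.-1) in
  let w := S *m Q *m diag_mx lam ^+ k *m nu in
  vnorm w != 0 ->
  A - Ahat A x0 k =
  A *m (1%:M - (vnorm w ^+ 2)^-1 *:
          (w *m nu^T *m diag_mx lam ^+ k *m Q^T)) *m S.
Proof.
move=> _ _ _ QtQ _ _ Adef _ kerQbar x0def _.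
case: k => [//|k] _ _ S w w_neq0.
have AQ : A *m Q = Q *m diag_mx lam by rewrite {1}Adef -!mulmxA QtQ mulmx1.
have AQbar : A *m Qbar = 0.
  apply: trmx_inj; rewrite trmx_mul trmx0.
  by apply/sub_kermxP; case/andP: kerQbar.
have xkE := iter_x_succ_eigen A x0 AQ AQbar x0def k.
have wE : w = S *m iter_x A x0 k.+1 by rewrite xkE !mulmxA.
have /is_orth_proj_complP[symS _ _] := orth_proj_complP (Xmat A x0 k).
have wtE : w *m nu^T *m diag_mx lam ^+ k.+1 *m Q^T *m S = w *m w^T.
  by rewrite wE xkE !trmx_mul symS trmxX tr_diag_mx !mulmxA.
rewrite wE in w_neq0.
have annX q (B : 'M_(q, n)) := mulmx_Xmat_succ_eq0 A x0 B k.
rewrite subr_Ahat (orth_proj_compl_step annX) //.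
by rewrite -wE -mulmxA mulmxBl mul1mx -scalemxAl wtE.
Qed.
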